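(* Let $A=(a_n)_{n\ge1}$ and $B=(b_n)_{n\ge1}$ be decreasing sequences of positive real numbers converging to $0$, such that the difference sequences $(a_n-a_{n+1})_{n\ge1}$ and $(b_n-b_{n+1})_{n\ge1}$ are monotonically nonincreasing. If $a_n\le b_n$ for all $n$, then $\overline{\dim}_BA\le\overline{\dim}_BB$ and $\underline{\dim}_BA\le\underline{\dim}_BB$ (the sequences being identified with the sets of their terms).
   Context: For a bounded set $S\subset\mathbb{R}$ and $\varepsilon>0$, $S_\varepsilon=\{y: \mathrm{dist}(y,S)<\varepsilon\}$ and $|S_\varepsilon|$ is its Lebesgue measure. $\mathcal M^{*s}(S)=\limsup_{\varepsilon\to0}|S_\varepsilon|/\varepsilon^{1-s}$, $\mathcal M_*^{s}(S)=\liminf_{\varepsilon\to0}|S_\varepsilon|/\varepsilon^{1-s}$; $\overline{\dim}_BS=\inf\{s\ge0:\mathcal M^{*s}(S)=0\}$ and $\underline{\dim}_BS=\inf\{s\ge0:\mathcal M_*^{s}(S)=0\}$. *)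

From Stdlib Require Import Reals Lra ClassicalEpsilon.
Open Scope R_scope.

Definition is_inf (E : R -> Prop) (m : R) : Prop :=
  (forall x, E x -> m <= x) /\ (forall m', (forall x, E x -> m' <= x) -> m' <= m).

Definition cover_sums (U : R -> Prop) (x : R) : Prop :=
  exists a b : nat -> R,
    (forall n, a n <= b n) /\
    (forall y, U y -> exists n, a n < y < b n) /\
    infinite_sum (fun n => b n - a n) x.

(* Lebesgue (outer) measure of U; meaningful for bounded U. *)
Definition lmeasure (U : R -> Prop) : R :=
  epsilon (inhabits 0) (is_inf (cover_sums U)).

Definition nbhd (S : R -> Prop) (eps : R) : R -> Prop :=
  fun y => exists x, S x /\ Rabs (y - x) < eps.

Definition mink_ratio (S : R -> Prop) (s eps : R) : R :=
  lmeasure (nbhd S eps) / Rpower eps (1 - s).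

(* Upper Minkowski content M^{*s}(S) = limsup_{eps->0} ratio.
   Since the ratio is >= 0, M^{*s}(S) = 0 iff
   for all d > 0 there is eta > 0 with sup_{0<eps<eta} ratio <= d,
   i.e. ratio <= d for all 0 < eps < eta. *)
Definition upper_content_zero (S : R -> Prop) (s : R) : Prop :=
  forall d, 0 < d -> exists eta, 0 < eta /\
    forall eps, 0 < eps < eta -> mink_ratio S s eps <= d.

(* Lower Minkowski content M_*^s(S) = liminf_{eps->0} ratio = 0 iff
   for all d > 0 and eta > 0, inf_{0<eps<eta} ratio <= d ... i.e.
   there are eps arbitrarily small with ratio < d. *)
Definition lower_content_zero (S : R -> Prop) (s : R) : Prop :=
  forall d eta, 0 < d -> 0 < eta -> exists eps, 0 < eps < eta /\
    mink_ratio S s eps < d.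

Definition upper_box_dim (S : R -> Prop) : R :=
  epsilon (inhabits 0) (is_inf (fun s => 0 <= s /\ upper_content_zero S s)).

Definition lower_box_dim (S : R -> Prop) : R :=
  epsilon (inhabits 0) (is_inf (fun s => 0 <= s /\ lower_content_zero S s)).

Definition seq_set (a : nat -> R) : R -> Prop :=
  fun x => exists n, (1 <= n)%nat /\ x = a n.

Definition good_seq (a : nat -> R) : Prop :=
  (forall n, (1 <= n)%nat -> 0 < a n) /\
  (forall n, (1 <= n)%nat -> a (S n) < a n) /\
  (forall e, 0 < e -> exists N, forall n, (N <= n)%nat -> Rabs (a n) < e) /\
  (forall n, (1 <= n)%nat -> a (S n) - a (S (S n)) <= a n - a (S n)).

From Stdlib Require Import Reals Lra Lia ClassicalEpsilon Classical List Arith.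
Open Scope R_scope.

(* For a positive decreasing sequence u and eps > 0, the eps-neighbourhood of
   {u_n : n >= 1} is covered by the intervals (u_n - eps, u_n + eps), n < M,
   together with (-eps, u_M + eps); hence |U_eps| <= u_M + 2 eps M for EVERY
   M >= 1.  If moreover the gaps u_n - u_{n+1} are nonincreasing and M is the
   first index whose gap is < 2 eps, then all later gaps are < 2 eps, so
   (-eps, u_M + eps) lies in U_eps, while the intervals around u_1, ..., u_{M-1}
   are pairwise disjoint; hence |U_eps| >= u_M + 2 eps M.  With a_n <= b_n this
   gives |A_eps| <= a_M + 2 eps M <= b_M + 2 eps M <= |B_eps| for the M of b,
   so every Minkowski ratio of A is dominated by that of B, and the box
   dimensions, being infima of sets of exponents, compare accordingly. *)

Lemma inf_exists (E : R -> Prop) :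
  (exists x, E x) -> (forall x, E x -> 0 <= x) -> exists m, is_inf E m.
Proof.
  intros [x0 Hx0] Hpos.
  destruct (completeness (fun x => E (- x))) as [m [Hub Hleast]].
  - exists 0. intros x Hx. specialize (Hpos _ Hx). lra.
  - exists (- x0). rewrite Ropp_involutive. exact Hx0.
  - exists (- m). split.
    + intros x Hx.
      assert (- x <= m) by (apply Hub; rewrite Ropp_involutive; exact Hx). lra.
    + intros m' Hm'.
      assert (m <= - m') by (apply Hleast; intros x Hx; specialize (Hm' _ Hx); lra). lra.
Qed.

Lemma epsilon_is_inf (E : R -> Prop) :
  (exists x, E x) -> (forall x, E x -> 0 <= x) ->
  is_inf E (epsilon (inhabits 0) (is_inf E)).
Proof. intros Hne Hpos. apply epsilon_spec, inf_exists; assumption. Qed.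

Lemma epsilon_inf_antimono (E1 E2 : R -> Prop) :
  (forall x, E2 x -> E1 x) -> (exists x, E2 x) -> (forall x, E1 x -> 0 <= x) ->
  epsilon (inhabits 0) (is_inf E1) <= epsilon (inhabits 0) (is_inf E2).
Proof.
  intros Hsub [x Hx] Hpos.
  destruct (epsilon_is_inf E1 ltac:(eauto) Hpos) as [Hlow1 _].
  destruct (epsilon_is_inf E2 ltac:(eauto) ltac:(auto)) as [_ Hgreat2].
  apply Hgreat2. intros y Hy. apply Hlow1, Hsub, Hy.
Qed.

Lemma le_of_le_minus_small (A x C r : R) :
  0 < r -> (forall delta, 0 < delta < r -> A - C * delta <= x) -> A <= x.
Proof.
  intros Hr Hsmall. destruct (Rle_lt_dec A x) as [Hle|Hlt]; [exact Hle|].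
  set (delta := Rmin (r / 2) ((A - x) / (2 * (Rabs C + 1)))).
  assert (HC : 0 < Rabs C + 1) by (pose proof (Rabs_pos C); lra).
  assert (Hd1 : delta <= r / 2) by apply Rmin_l.
  assert (Hd2 : delta <= (A - x) / (2 * (Rabs C + 1))) by apply Rmin_r.
  assert (Hdpos : 0 < delta).
  { apply Rmin_pos; [lra|]. apply Rdiv_lt_0_compat; lra. }
  assert (Hbound : Rabs C * delta <= (A - x) / 2).
  { apply Rle_trans with ((Rabs C + 1) * ((A - x) / (2 * (Rabs C + 1)))).
    - apply Rmult_le_compat; try lra. apply Rabs_pos.
    - right. field. lra. }
  assert (HCd : C * delta <= Rabs C * delta)
    by (apply Rmult_le_compat_r; [lra | apply Rle_abs]).
  specialize (Hsmall delta ltac:(lra)). lra.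
Qed.

Lemma cover_sums_nonneg (U : R -> Prop) (x : R) : cover_sums U x -> 0 <= x.
Proof.
  intros [a [b [Hab [_ Hsum]]]].
  pose proof (sum_incr (fun n => b n - a n) 0 x Hsum) as Hpartial. simpl in Hpartial.
  specialize (Hab 0%nat) as Hab0.
  apply Rle_trans with (b 0%nat - a 0%nat); [lra|].
  apply Hpartial. intros n. specialize (Hab n). lra.
Qed.

Lemma lmeasure_is_inf (U : R -> Prop) (x : R) :
  cover_sums U x -> is_inf (cover_sums U) (lmeasure U).
Proof.
  intros Hx. apply epsilon_is_inf; [exists x; exact Hx | apply cover_sums_nonneg].
Qed.

Lemma lmeasure_le_cover (U : R -> Prop) (x : R) : cover_sums U x -> lmeasure U <= x.
Proof. intros Hx. apply (proj1 (lmeasure_is_inf U x Hx)), Hx. Qed.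

Lemma lmeasure_ge (U : R -> Prop) (L : R) :
  (exists x, cover_sums U x) -> (forall x, cover_sums U x -> L <= x) -> L <= lmeasure U.
Proof. intros [x Hx] Hlow. apply (proj2 (lmeasure_is_inf U x Hx)), Hlow. Qed.

Definition lsum (L : list (R * R)) : R := fold_right (fun p s => snd p - fst p + s) 0 L.

Lemma lsum_app (l1 l2 : list (R * R)) : lsum (l1 ++ l2) = lsum l1 + lsum l2.
Proof. induction l1 as [|p l1 IH]; simpl; [lra | rewrite IH; lra]. Qed.

Lemma lsum_nonneg (L : list (R * R)) :
  (forall p, In p L -> fst p <= snd p) -> 0 <= lsum L.
Proof.
  induction L as [|p L IH]; simpl; intros Hvalid; [lra|].
  assert (fst p <= snd p) by (apply Hvalid; auto).
  assert (0 <= lsum L) by (apply IH; auto). lra.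
Qed.

Lemma lsum_seq (a b : nat -> R) (K : nat) :
  lsum (map (fun n => (a n, b n)) (seq 0 (S K))) = sum_f_R0 (fun n => b n - a n) K.
Proof.
  induction K as [|K IH]; [simpl; lra|].
  rewrite seq_S, map_app, lsum_app, IH. simpl. lra.
Qed.

(* Induction on the number of intervals: remove
   one containing the right endpoint d; the rest covers [c, fst p]. *)
Lemma interval_le_finite_cover (n : nat) : forall L, length L = n ->
  (forall p, In p L -> fst p <= snd p) -> forall c d, c <= d ->
  (forall y, c <= y <= d -> exists p, In p L /\ fst p < y < snd p) -> d - c <= lsum L.
Proof.
  induction n as [|n IH]; intros L Hlen Hvalid c d Hcd Hcov.
  - destruct L; [|discriminate]. destruct (Hcov d) as [p [[] _]]; lra.
  - destruct (Hcov d) as [p [Hp Hpd]]; [lra|].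
    destruct (in_split p L Hp) as [l1 [l2 ->]].
    assert (Hvalid' : forall q, In q (l1 ++ l2) -> fst q <= snd q).
    { intros q Hq. apply Hvalid. apply in_app_or in Hq. apply in_or_app. simpl. tauto. }
    assert (Hrest := lsum_nonneg _ Hvalid'). rewrite lsum_app in *. simpl.
    destruct (Rlt_le_dec (fst p) c) as [Hlt|Hge]; [lra|].
    assert (fst p - c <= lsum (l1 ++ l2)).
    { apply (IH (l1 ++ l2)); auto.
      - rewrite length_app in *. simpl in Hlen. lia.
      - intros y Hy. destruct (Hcov y) as [q [Hq Hqy]]; [lra|].
        exists q. split; [|exact Hqy].
        apply in_app_or in Hq. destruct Hq as [Hq|[Hq|Hq]].
        + apply in_or_app; auto.
        + subst q. lra.
        + apply in_or_app; auto. }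
    rewrite lsum_app in *. lra.
Qed.

Definition clip_left (p : R) (L : list (R * R)) :=
  map (fun q => (Rmin (fst q) p, Rmin (snd q) p)) L.
Definition clip_right (p : R) (L : list (R * R)) :=
  map (fun q => (Rmax (fst q) p, Rmax (snd q) p)) L.

Lemma lsum_clip (p : R) (L : list (R * R)) :
  lsum (clip_left p L) + lsum (clip_right p L) = lsum L.
Proof.
  induction L as [|q L IH]; simpl; [lra|].
  unfold clip_left, clip_right in *. simpl. rewrite <- IH.
  unfold Rmin, Rmax; destruct (Rle_dec (fst q) p); destruct (Rle_dec (snd q) p); simpl; lra.
Qed.

Lemma clip_left_valid (p : R) (L : list (R * R)) :
  (forall q, In q L -> fst q <= snd q) -> forall q, In q (clip_left p L) -> fst q <= snd q.
Proof.
  intros Hvalid q Hq. apply in_map_iff in Hq. destruct Hq as [q' [<- Hq']].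
  specialize (Hvalid q' Hq'). simpl.
  unfold Rmin; destruct (Rle_dec (fst q') p); destruct (Rle_dec (snd q') p); lra.
Qed.

Lemma clip_right_valid (p : R) (L : list (R * R)) :
  (forall q, In q L -> fst q <= snd q) -> forall q, In q (clip_right p L) -> fst q <= snd q.
Proof.
  intros Hvalid q Hq. apply in_map_iff in Hq. destruct Hq as [q' [<- Hq']].
  specialize (Hvalid q' Hq'). simpl.
  unfold Rmax; destruct (Rle_dec (fst q') p); destruct (Rle_dec (snd q') p); lra.
Qed.

Lemma separated_ends_increase (c d : nat -> R) (m : nat) :
  (forall j, c j <= d j) -> (forall j, (j < m)%nat -> d j < c (S j)) ->
  forall j, (j <= m)%nat -> d j <= d m.
Proof.
  intros Hcd Hsep j Hj. induction m as [|m IH].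
  - replace j with 0%nat by lia. lra.
  - destruct (Nat.eq_dec j (S m)) as [->|Hne]; [lra|].
    assert (d j <= d m) by (apply IH; [intros; apply Hsep; lia | lia]).
    assert (d m < c (S m)) by (apply Hsep; lia). specialize (Hcd (S m)). lra.
Qed.

(* Separated closed intervals [c_0,d_0] < ... < [c_m,d_m] covered by finitely
   many open intervals have total length at most theirs: clip the cover at a
   point between d_m and c_(m+1) and recurse on the left part. *)
Lemma separated_intervals_le_finite_cover (c d : nat -> R) :
  (forall j, c j <= d j) -> forall m,
  (forall j, (j < m)%nat -> d j < c (S j)) -> forall L,
  (forall p, In p L -> fst p <= snd p) ->
  (forall j y, (j <= m)%nat -> c j <= y <= d j -> exists q, In q L /\ fst q < y < snd q) ->
  sum_f_R0 (fun j => d j - c j) m <= lsum L.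
Proof.
  intros Hcd m. induction m as [|m IH]; intros Hsep L Hvalid Hcov.
  - simpl. apply (interval_le_finite_cover (length L)); auto.
    intros y Hy. apply (Hcov 0%nat); auto.
  - simpl. set (p := (d m + c (S m)) / 2). rewrite <- (lsum_clip p L).
    assert (Hgap : d m < c (S m)) by (apply Hsep; lia).
    assert (Hleft : sum_f_R0 (fun j => d j - c j) m <= lsum (clip_left p L)).
    { apply IH; [intros; apply Hsep; lia | apply clip_left_valid; exact Hvalid|].
      intros j y Hj Hy.
      assert (d j <= d m)
        by (apply (separated_ends_increase c d m); auto; intros; apply Hsep; lia).
      destruct (Hcov j y) as [q [Hq Hqy]]; [lia | auto |].
      exists (Rmin (fst q) p, Rmin (snd q) p). split; [apply in_map_iff; eauto|].
      simpl. unfold p in *.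
      unfold Rmin; destruct (Rle_dec (fst q) _); destruct (Rle_dec (snd q) _); lra. }
    assert (Hright : d (S m) - c (S m) <= lsum (clip_right p L)).
    { apply (interval_le_finite_cover (length (clip_right p L))); auto;
        [apply clip_right_valid; exact Hvalid|].
      intros y Hy. destruct (Hcov (S m) y) as [q [Hq Hqy]]; [lia | auto |].
      exists (Rmax (fst q) p, Rmax (snd q) p). split; [apply in_map_iff; eauto|].
      simpl. unfold p in *.
      unfold Rmax; destruct (Rle_dec (fst q) _); destruct (Rle_dec (snd q) _); lra. }
    lra.
Qed.

Lemma nat_list_bound (l : list R) : (forall r, In r l -> exists n, r = INR n) ->
  exists K, forall r n, In r l -> r = INR n -> (n <= K)%nat.
Proof.
  induction l as [|r l IH]; intros Hnat.
  - exists 0%nat. intros r n [].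
  - destruct IH as [K HK]; [intros; apply Hnat; simpl; auto|].
    destruct (Hnat r) as [n0 Hn0]; [simpl; auto|].
    exists (Nat.max K n0). intros r' n [Hr|Hr] Hrn.
    + subst. apply INR_eq in Hrn. lia.
    + specialize (HK r' n Hr Hrn). lia.
Qed.

Lemma finite_subcover (a b : nat -> R) (c d : R) :
  c <= d -> (forall y, c <= y <= d -> exists n, a n < y < b n) ->
  exists K, forall y, c <= y <= d -> exists n, (n <= K)%nat /\ a n < y < b n.
Proof.
  intros Hcd Hcov.
  set (fam := fun r y => exists n, r = INR n /\ a n < y < b n).
  assert (Hind : forall r, (exists y, fam r y) -> (fun r => exists n : nat, r = INR n) r).
  { intros r [y [n [Hn _]]]. exists n; auto. }
  set (F := mkfamily (fun r => exists n : nat, r = INR n) fam Hind).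
  destruct (compact_P3 c d F) as [D [HDcov [l Hl]]].
  - split.
    + intros y Hy. destruct (Hcov y Hy) as [n Hn]. exists (INR n). simpl. exists n; auto.
    + intros r y [n [Hr Hy]].
      assert (Hpos : 0 < Rmin (y - a n) (b n - y)) by (apply Rmin_pos; lra).
      exists (mkposreal _ Hpos). intros z Hz. unfold disc in Hz. simpl in Hz.
      apply Rabs_def2 in Hz.
      assert (Rmin (y - a n) (b n - y) <= y - a n) by apply Rmin_l.
      assert (Rmin (y - a n) (b n - y) <= b n - y) by apply Rmin_r.
      exists n. split; auto. lra.
  - destruct (nat_list_bound l) as [K HK].
    { intros r Hr. apply Hl in Hr. exact (proj1 Hr). }
    exists K. intros y Hy. destruct (HDcov y Hy) as [r [[n [Hrn Hn]] HDr]].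
    exists n. split; auto. apply (HK r n); auto. apply Hl. split; auto. exists n; auto.
Qed.

Lemma finite_subcover_intervals (a b c d : nat -> R) (m : nat) :
  (forall j, c j <= d j) ->
  (forall j y, (j <= m)%nat -> c j <= y <= d j -> exists n, a n < y < b n) ->
  exists K, forall j y, (j <= m)%nat -> c j <= y <= d j ->
    exists n, (n <= K)%nat /\ a n < y < b n.
Proof.
  intros Hcd Hcov. induction m as [|m IH].
  - destruct (finite_subcover a b (c 0%nat) (d 0%nat)) as [K HK];
      [auto | intros y Hy; apply (Hcov 0%nat); auto |].
    exists K. intros j y Hj Hy. replace j with 0%nat in * by lia. auto.
  - destruct IH as [K1 HK1]; [intros j y Hj; apply Hcov; lia|].
    destruct (finite_subcover a b (c (S m)) (d (S m))) as [K2 HK2];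
      [auto | intros y Hy; apply (Hcov (S m)); auto |].
    exists (Nat.max K1 K2). intros j y Hj Hy.
    destruct (Nat.eq_dec j (S m)) as [->|Hne].
    + destruct (HK2 y Hy) as [n [Hn Hy']]. exists n; split; auto; lia.
    + destruct (HK1 j y) as [n [Hn Hy']]; auto; [lia|]. exists n; split; auto; lia.
Qed.

Lemma separated_intervals_le_cover_sum (c d : nat -> R) (m : nat) (U : R -> Prop) (x : R) :
  (forall j, c j <= d j) ->
  (forall j, (j < m)%nat -> d j < c (S j)) ->
  (forall j y, (j <= m)%nat -> c j <= y <= d j -> U y) ->
  cover_sums U x -> sum_f_R0 (fun j => d j - c j) m <= x.
Proof.
  intros Hcd Hsep HU [a [b [Hab [Hcov Hsum]]]].
  destruct (finite_subcover_intervals a b c d m Hcd) as [K HK].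
  { intros j y Hj Hy. apply Hcov. apply (HU j); auto. }
  apply Rle_trans with (lsum (map (fun n => (a n, b n)) (seq 0 (S K)))).
  - apply separated_intervals_le_finite_cover; auto.
    + intros p Hp. apply in_map_iff in Hp. destruct Hp as [n [<- _]]. simpl. auto.
    + intros j y Hj Hy. destruct (HK j y Hj Hy) as [n [Hn Hy']].
      exists (a n, b n). split; auto. apply in_map_iff. exists n; split; auto.
      apply in_seq. lia.
  - rewrite lsum_seq. apply sum_incr; [exact Hsum|]. intros n. specialize (Hab n). lra.
Qed.

Lemma infinite_sum_finite (f : nat -> R) (K : nat) :
  (forall n, (K < n)%nat -> f n = 0) -> infinite_sum f (sum_f_R0 f K).
Proof.
  intros Hzero eps Heps. exists K. intros n Hn.
  assert (Hstable : sum_f_R0 f n = sum_f_R0 f K).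
  { induction Hn as [|n Hn IH]; auto. simpl. rewrite IH, Hzero; [lra | lia]. }
  rewrite Hstable. unfold R_dist. rewrite Rminus_diag, Rabs_R0. lra.
Qed.

Lemma least_witness (P : nat -> Prop) (n : nat) :
  P n -> exists m, P m /\ (forall k, (k < m)%nat -> ~ P k).
Proof.
  induction n as [n IH] using lt_wf_ind. intros Hn.
  destruct (classic (exists k, (k < n)%nat /\ P k)) as [[k [Hk Pk]]|Hnone].
  - apply (IH k Hk Pk).
  - exists n; split; auto. intros k Hk Pk. apply Hnone; eauto.
Qed.

Section SequenceNeighbourhood.

Variable u : nat -> R.
Hypothesis u_pos : forall n, (1 <= n)%nat -> 0 < u n.
Hypothesis u_decr : forall n, (1 <= n)%nat -> u (S n) < u n.
Hypothesis u_null : forall e, 0 < e -> exists N, forall n, (N <= n)%nat -> Rabs (u n) < e.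
Hypothesis u_convex : forall n, (1 <= n)%nat -> u (S n) - u (S (S n)) <= u n - u (S n).

Lemma u_antitone (M n : nat) : (1 <= M)%nat -> (M <= n)%nat -> u n <= u M.
Proof.
  intros HM Hn. induction Hn as [|n Hn IH]; [lra|].
  assert (u (S n) < u n) by (apply u_decr; lia). lra.
Qed.

(* Upper estimate, for every M >= 1: intervals of radius eps around
   u_1, ..., u_(M-1) and the interval (-eps, u_M + eps) around the tail. *)
Lemma nbhd_cover (M : nat) (eps : R) : (1 <= M)%nat -> 0 < eps ->
  cover_sums (nbhd (seq_set u) eps) (u M + 2 * eps * INR M).
Proof.
  intros HM Heps.
  set (lo := fun n : nat =>
    match n with O => - eps | _ => if (n <? M)%nat then u n - eps else 0 end).
  set (hi := fun n : nat =>
    match n with O => u M + eps | _ => if (n <? M)%nat then u n + eps else 0 end).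
  assert (HuM : 0 < u M) by auto.
  exists lo, hi. split; [|split].
  - intros [|n]; unfold lo, hi; [lra | destruct (S n <? M)%nat; lra].
  - intros y [x [[n [Hn ->]] Hy]]. apply Rabs_def2 in Hy.
    destruct (lt_dec n M) as [Hlt|Hge].
    + exists n. unfold lo, hi. destruct n as [|n']; [lia|].
      replace (S n' <? M)%nat with true by (symmetry; apply Nat.ltb_lt; lia). lra.
    + exists 0%nat. unfold lo, hi.
      assert (u n <= u M) by (apply u_antitone; lia).
      assert (0 < u n) by auto. lra.
  - assert (Hpartial : forall k, (k <= M - 1)%nat ->
              sum_f_R0 (fun n => hi n - lo n) k = u M + 2 * eps + 2 * eps * INR k).
    { induction k as [|k IH]; intros Hk; [simpl; unfold hi, lo; lra|].
      rewrite tech5, IH by lia. unfold hi, lo.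
      replace (S k <? M)%nat with true by (symmetry; apply Nat.ltb_lt; lia).
      rewrite S_INR. lra. }
    replace (u M + 2 * eps * INR M) with (sum_f_R0 (fun n => hi n - lo n) (M - 1)).
    + apply infinite_sum_finite. intros n Hn. unfold hi, lo. destruct n as [|n]; [lia|].
      replace (S n <? M)%nat with false by (symmetry; apply Nat.ltb_ge; lia). lra.
    + rewrite Hpartial by lia. rewrite minus_INR by lia. simpl. lra.
Qed.

Lemma small_gaps_persist (M : nat) (eps : R) :
  (1 <= M)%nat -> u M - u (S M) < 2 * eps ->
  forall n, (M <= n)%nat -> u n - u (S n) < 2 * eps.
Proof.
  intros HM HgapM n Hn. induction Hn as [|n Hn IH]; auto.
  assert (u (S n) - u (S (S n)) <= u n - u (S n)) by (apply u_convex; lia). lra.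
Qed.

Lemma nbhd_contains_tail (M : nat) (eps : R) : (1 <= M)%nat -> 0 < eps ->
  (forall n, (M <= n)%nat -> u n - u (S n) < 2 * eps) ->
  forall y, - eps < y < u M + eps -> nbhd (seq_set u) eps y.
Proof.
  intros HM Heps Hgaps y Hy.
  destruct (Rle_lt_dec (u M) y) as [Hhigh|Hbelow].
  { exists (u M). split; [exists M; auto | apply Rabs_def1; lra]. }
  destruct (Rle_lt_dec y 0) as [Hneg|Hposy].
  { destruct (u_null (y + eps)) as [N HN]; [lra|].
    set (n := Nat.max N 1).
    assert (Hn := HN n ltac:(lia)). assert (0 < u n) by (apply u_pos; lia).
    rewrite Rabs_right in Hn by lra.
    exists (u n). split; [exists n; split; auto; lia | apply Rabs_def1; lra]. }
  (* y lies between two consecutive terms u_(k+1) < y <= u_k with k >= M *)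
  destruct (u_null y Hposy) as [N HN].
  set (k0 := Nat.max N M).
  assert (Hk0 : (M <= k0)%nat /\ u k0 < y).
  { split; [lia|]. assert (H := HN k0 ltac:(lia)). apply Rabs_def2 in H. lra. }
  destruct (least_witness (fun k => (M <= k)%nat /\ u k < y) k0 Hk0)
    as [k [[HMk Hky] Hfirst]].
  destruct k as [|n]; [lia|].
  destruct (Nat.eq_dec (S n) M) as [He|Hne]; [subst M; lra|].
  assert (Hyn : y <= u n).
  { destruct (Rle_lt_dec y (u n)) as [?|Hlt]; auto.
    exfalso. apply (Hfirst n); [lia | split; [lia | auto]]. }
  assert (Hgap := Hgaps n ltac:(lia)).
  destruct (Rlt_le_dec (y - u (S n)) eps) as [Hclose|Hfar].
  - exists (u (S n)). split; [exists (S n); split; auto; lia | apply Rabs_def1; lra].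
  - exists (u n). split; [exists n; split; auto; lia | apply Rabs_def1; lra].
Qed.

Lemma first_small_gap (eps : R) : 0 < eps -> exists M, (1 <= M)%nat /\
  u M - u (S M) < 2 * eps /\
  (forall k, (1 <= k)%nat -> (k < M)%nat -> 2 * eps <= u k - u (S k)).
Proof.
  intros Heps. destruct (u_null (2 * eps)) as [N HN]; [lra|].
  set (n0 := Nat.max N 1).
  assert (Hn0 : (1 <= n0)%nat /\ u n0 - u (S n0) < 2 * eps).
  { split; [lia|]. assert (H := HN n0 ltac:(lia)). apply Rabs_def2 in H.
    assert (0 < u (S n0)) by (apply u_pos; lia). lra. }
  destruct (least_witness (fun n => (1 <= n)%nat /\ u n - u (S n) < 2 * eps) n0 Hn0)
    as [M [[HM HgapM] Hfirst]].
  exists M. repeat split; auto. intros k Hk1 Hk2.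
  destruct (Rle_lt_dec (2 * eps) (u k - u (S k))) as [?|Hlt]; auto.
  exfalso. apply (Hfirst k Hk2). auto.
Qed.

(* Lower estimate at the first small gap M = m + 1: the closed intervals
   [-eps+delta, u_M+eps-delta] and [u_j-eps+delta, u_j+eps-delta], j = m..1,
   are separated and lie in the neighbourhood. *)
Lemma nbhd_measure_ge_shrunk (m : nat) (eps delta : R) : 0 < delta < eps ->
  (forall k, (1 <= k)%nat -> (k < S m)%nat -> 2 * eps <= u k - u (S k)) ->
  u (S m) - u (S (S m)) < 2 * eps ->
  u (S m) + 2 * eps * INR (S m) - 2 * INR (S m) * delta
    <= lmeasure (nbhd (seq_set u) eps).
Proof.
  intros Hdelta Hbig Hsmall.
  set (c := fun j : nat => match j with
                           | O => - eps + delta | S i => u (m - i)%nat - eps + delta end).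
  set (d := fun j : nat => match j with
                           | O => u (S m) + eps - delta | S i => u (m - i)%nat + eps - delta end).
  assert (Hlength : forall k, sum_f_R0 (fun j => d j - c j) k
                              = u (S m) + 2 * eps - 2 * delta + INR k * (2 * eps - 2 * delta)).
  { induction k as [|k IH]; [simpl; lra|]. rewrite tech5, IH, S_INR. simpl. lra. }
  assert (HuM : 0 < u (S m)) by (apply u_pos; lia).
  apply lmeasure_ge; [exists (u 1%nat + 2 * eps * INR 1); apply nbhd_cover; auto; lra|].
  intros x Hx.
  pose proof (separated_intervals_le_cover_sum c d m (nbhd (seq_set u) eps) x) as Hsum.
  rewrite Hlength in Hsum. rewrite S_INR.
  enough (u (S m) + 2 * eps - 2 * delta + INR m * (2 * eps - 2 * delta) <= x) by lra.
  apply Hsum; auto.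
  - intros [|j]; unfold c, d; lra.
  - intros [|j] Hj; unfold c, d.
    + replace (m - 0)%nat with m by lia. assert (H := Hbig m ltac:(lia) ltac:(lia)). lra.
    + replace (m - j)%nat with (S (m - S j)) by lia.
      assert (H := Hbig (m - S j)%nat ltac:(lia) ltac:(lia)). lra.
  - intros [|j] y Hj Hy; unfold c, d in Hy.
    + apply (nbhd_contains_tail (S m) eps); try lia; try lra.
      apply small_gaps_persist; auto; lia.
    + exists (u (m - j)%nat). split; [exists (m - j)%nat; split; auto; lia|].
      apply Rabs_def1; lra.
Qed.

Lemma nbhd_measure_ge (eps : R) : 0 < eps -> exists M, (1 <= M)%nat /\
  u M + 2 * eps * INR M <= lmeasure (nbhd (seq_set u) eps).
Proof.
  intros Heps.
  destruct (first_small_gap eps Heps) as [[|m] [HM [Hsmall Hbig]]]; [lia|].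
  exists (S m). split; auto.
  apply (le_of_le_minus_small _ _ (2 * INR (S m)) eps Heps).
  intros delta Hdelta. apply nbhd_measure_ge_shrunk; auto.
Qed.

End SequenceNeighbourhood.

Lemma nbhd_measure_le (a b : nat -> R) (eps : R) :
  good_seq a -> good_seq b -> (forall n, (1 <= n)%nat -> a n <= b n) -> 0 < eps ->
  lmeasure (nbhd (seq_set a) eps) <= lmeasure (nbhd (seq_set b) eps).
Proof.
  intros [Ha_pos [Ha_decr _]] [Hb_pos [Hb_decr [Hb_null Hb_convex]]] Hab Heps.
  destruct (nbhd_measure_ge b Hb_pos Hb_decr Hb_null Hb_convex eps Heps) as [M [HM HB]].
  assert (HA := lmeasure_le_cover _ _ (nbhd_cover a Ha_pos Ha_decr M eps HM Heps)).
  assert (a M <= b M) by auto. lra.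
Qed.

Lemma mink_ratio_le (a b : nat -> R) (s eps : R) :
  good_seq a -> good_seq b -> (forall n, (1 <= n)%nat -> a n <= b n) -> 0 < eps ->
  mink_ratio (seq_set a) s eps <= mink_ratio (seq_set b) s eps.
Proof.
  intros Ha Hb Hab Heps. unfold mink_ratio, Rdiv. apply Rmult_le_compat_r.
  - left. apply Rinv_0_lt_compat. unfold Rpower. apply exp_pos.
  - apply nbhd_measure_le; auto.
Qed.

Lemma upper_content_zero_mono (S T : R -> Prop) (s : R) :
  (forall eps, 0 < eps -> mink_ratio S s eps <= mink_ratio T s eps) ->
  upper_content_zero T s -> upper_content_zero S s.
Proof.
  intros Hle HT d Hd. destruct (HT d Hd) as [eta [Heta Hsmall]].
  exists eta. split; auto. intros eps Heps.
  apply Rle_trans with (mink_ratio T s eps); [apply Hle; lra | auto].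
Qed.

Lemma lower_content_zero_mono (S T : R -> Prop) (s : R) :
  (forall eps, 0 < eps -> mink_ratio S s eps <= mink_ratio T s eps) ->
  lower_content_zero T s -> lower_content_zero S s.
Proof.
  intros Hle HT d eta Hd Heta. destruct (HT d eta Hd Heta) as [eps [Heps Hsmall]].
  exists eps. split; auto.
  apply Rle_lt_trans with (mink_ratio T s eps); [apply Hle; lra | auto].
Qed.

Lemma upper_content_zero_lower (S : R -> Prop) (s : R) :
  upper_content_zero S s -> lower_content_zero S s.
Proof.
  intros Hup d eta Hd Heta. destruct (Hup (d / 2)) as [e [He Hsmall]]; [lra|].
  assert (0 < Rmin eta e) by (apply Rmin_pos; lra).
  assert (Rmin eta e <= eta) by apply Rmin_l.
  assert (Rmin eta e <= e) by apply Rmin_r.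
  exists (Rmin eta e / 2). split; [lra|].
  assert (mink_ratio S s (Rmin eta e / 2) <= d / 2) by (apply Hsmall; lra). lra.
Qed.

(* The exponent 2 always has vanishing content: |U_eps| / eps^(-1) is at most
   (u_1 + 2) eps for eps < 1, so the sets defining the dimensions are
   nonempty and the infima are meaningful. *)
Lemma upper_content_zero_two (u : nat -> R) :
  good_seq u -> upper_content_zero (seq_set u) 2.
Proof.
  intros [Hpos [Hdecr _]] d Hd. assert (Hu1 : 0 < u 1%nat) by auto.
  set (eta := Rmin 1 (d / (u 1%nat + 2))).
  assert (Heta1 : eta <= 1) by apply Rmin_l.
  assert (Heta2 : eta <= d / (u 1%nat + 2)) by apply Rmin_r.
  exists eta. split; [apply Rmin_pos; [lra | apply Rdiv_lt_0_compat; lra]|].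
  intros eps [Heps Hepseta].
  assert (Hmeas := lmeasure_le_cover _ _ (nbhd_cover u Hpos Hdecr 1 eps (le_n 1) Heps)).
  simpl INR in Hmeas.
  unfold mink_ratio. replace (1 - 2) with (- (1)) by ring.
  rewrite Rpower_Ropp, Rpower_1 by lra.
  replace (lmeasure (nbhd (seq_set u) eps) / / eps)
    with (lmeasure (nbhd (seq_set u) eps) * eps) by (field; lra).
  assert (Hscaled : (u 1%nat + 2) * eps < d).
  { apply Rlt_le_trans with ((u 1%nat + 2) * (d / (u 1%nat + 2))).
    - apply Rmult_lt_compat_l; lra.
    - right. field. lra. }
  apply Rle_trans with ((u 1%nat + 2) * eps); [|lra].
  apply Rmult_le_compat_r; lra.
Qed.

Theorem lemma2 (a b : nat -> R) :
  good_seq a -> good_seq b ->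
  (forall n, (1 <= n)%nat -> a n <= b n) ->
  upper_box_dim (seq_set a) <= upper_box_dim (seq_set b) /\
  lower_box_dim (seq_set a) <= lower_box_dim (seq_set b).
Proof.
  intros Ha Hb Hab.
  assert (Hratio : forall s eps, 0 < eps ->
            mink_ratio (seq_set a) s eps <= mink_ratio (seq_set b) s eps)
    by (intros; apply mink_ratio_le; auto).
  assert (Htwo := upper_content_zero_two b Hb).
  split; apply epsilon_inf_antimono; try (intros x [Hx _]; exact Hx).
  - intros s [Hs Hzero]. split; [exact Hs | exact (upper_content_zero_mono _ _ s (Hratio s) Hzero)].
  - exists 2. split; [lra | exact Htwo].
  - intros s [Hs Hzero]. split; [exact Hs | exact (lower_content_zero_mono _ _ s (Hratio s) Hzero)].
  - exists 2. split; [lra | apply upper_content_zero_lower, Htwo].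
Qed.
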